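(* Consider online binary classification with abstention with $d$ experts, and suppose the abstention costs satisfy $0\le c_t$ and $\max_t c_t<\frac12$. Then AdaHedge with abstention guarantees, for every expert $i\in\{1,\dots,d\}$, $$\sum_{t=1}^T\big((1-b_t)\ell_t(y_t^\star)+b_tc_t\big)\le\sum_{t=1}^T\ell_t(y_t^i)+\min\Big\{\frac{\ln d}{1-2\max_tc_t},\ 2\sqrt{\ln d\sum_{t=1}^Tv_t}\Big\}+\frac43\ln d+2,$$ where $v_t=\mathbb E_{i\sim\hat{\mathbf p}_t}\big[(\ell_t(\hat y_t)-\ell_t(y_t^i))^2\big]$.
   Context: Online classification with abstention: in each round $t=1,\dots,T$, the learner observes expert predictions $y_t^1,\dots,y_t^d\in[-1,1]$, predicts $y'_t\in[-1,1]\cup\{*\}$ ($*$ = abstain), the environment reveals $y_t\in\{-1,1\}$ and an abstention cost $c_t$, and the learner suffers $\ell_t(y'_t)=\frac12(1-y_ty'_t)$ if $y'_t\in[-1,1]$ and $c_t$ if $y'_t=*$. For expert $i$ its loss is $\ell_t(y_t^i)=\frac12(1-y_ty_t^i)\in[0,1]$. AdaHedge: with $L_{t,i}=\sum_{s<t}\ell_s(y_s^i)$, weights $\hat p_{t,i}\propto\exp(-\eta_tL_{t,i})$, where $\eta_t=\ln d/\Delta_{t-1}$ (and for $\Delta_{t-1}=0$ the weights are uniform over the experts minimizing $L_{t,i}$), $\Delta_t=\sum_{s\le t}\delta_s$, $\delta_s=h_s-m_s$, $h_s=\sum_i\hat p_{s,i}\ell_s(y_s^i)$, $m_s=-\frac1{\eta_s}\ln\sum_i\hat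 p_{s,i}e^{-\eta_s\ell_s(y_s^i)}$ (with $m_s=\min_{i:\hat p_{s,i}>0}\ell_s(y_s^i)$ when $\eta_s=\infty$). AdaHedge with abstention (Algorithm 2): in round $t$ obtain $\hat{\mathbf p}_t$ from AdaHedge, set $\hat y_t=\sum_i\hat p_{t,i}y_t^i$, $y_t^\star=\mathrm{sign}(\hat y_t)$, $b_t=1-|\hat y_t|$; predict $y'_t=y_t^\star$ with probability $1-b_t$ and abstain with probability $b_t$; then feed the expert losses $\ell_t(y_t^i)$ to AdaHedge. The quantity $(1-b_t)\ell_t(y_t^\star)+b_tc_t$ is the learner's expected loss in round $t$. *)

From HB Require Import structures.
From mathcomp Require Import all_boot all_order all_algebra.
From mathcomp Require Import all_classical all_reals all_analysis.
Set Implicit Arguments.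
Unset Strict Implicit.
Unset Printing Implicit Defensive.
Import Order.TTheory GRing.Theory Num.Theory.
Local Open Scope ring_scope.

(* Rounds are indexed 0,1,...,T-1 (round t here = round t+1 of the paper).
   y t : label in {-1,1}; ye t i : prediction of expert i in [-1,1];
   c t : abstention cost. *)

Section AdaHedge.
Variables (R : realType) (d : nat).

Definition lossf (yt yp : R) : R := (1 - yt * yp) / 2.

Definition eloss (y : nat -> R) (ye : nat -> 'I_d -> R) (t : nat) (i : 'I_d) : R :=
  lossf (y t) (ye t i).

Definition cumL (y : nat -> R) (ye : nat -> 'I_d -> R) (t : nat) (i : 'I_d) : R :=
  \sum_(s < t) eloss y ye s i.

(* learning rate eta = ln d / Delta (used only when Delta <> 0) *)
Definition eta_of (Dl : R) : R := ln (d%:R) / Dl.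

Definition ah_weights (Dl : R) (L : 'I_d -> R) (i : 'I_d) : R :=
  if Dl == 0 then
    (if [forall j, L i <= L j]
     then (#|[set k | [forall j, L k <= L j]]|%:R)^-1 else 0)
  else expR (- eta_of Dl * L i) / \sum_(j < d) expR (- eta_of Dl * L j).

Definition hedge_loss (p l : 'I_d -> R) : R := \sum_(i < d) p i * l i.

(* mix loss m = -1/eta ln sum_i p_i e^{-eta l_i};
   for eta = infinity (Delta = 0): min over {i | p_i > 0} of l_i *)
Definition mix_loss (Dl : R) (p l : 'I_d -> R) : R :=
  if Dl == 0 then
    \big[Num.min/(if [pick i | 0 < p i] is Some i0 then l i0 else 0)]_(i | 0 < p i) l i
  else - (eta_of Dl)^-1 * ln (\sum_(i < d) p i * expR (- eta_of Dl * l i)).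

Fixpoint ah_Delta (y : nat -> R) (ye : nat -> 'I_d -> R) (t : nat) : R :=
  match t with
  | 0 => 0
  | s.+1 =>
      let D := ah_Delta y ye s in
      let p := ah_weights D (cumL y ye s) in
      D + (hedge_loss p (eloss y ye s) - mix_loss D p (eloss y ye s))
  end.

Definition ah_p (y : nat -> R) (ye : nat -> 'I_d -> R) (t : nat) : 'I_d -> R :=
  ah_weights (ah_Delta y ye t) (cumL y ye t).

Definition yhat (y : nat -> R) (ye : nat -> 'I_d -> R) (t : nat) : R :=
  \sum_(i < d) ah_p y ye t i * ye t i.

Definition ystar y ye t : R := Num.sg (yhat y ye t).

Definition bprob y ye t : R := 1 - `|yhat y ye t|.

Definition learner_exp_loss y ye (c : nat -> R) t : R :=
  (1 - bprob y ye t) * lossf (y t) (ystar y ye t) + bprob y ye t * c t.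

Definition vt y ye t : R :=
  \sum_(i < d) ah_p y ye t i * (lossf (y t) (yhat y ye t) - eloss y ye t i) ^+ 2.

End AdaHedge.

From HB Require Import structures.
From mathcomp Require Import all_boot all_order all_algebra.
From mathcomp Require Import all_classical all_reals all_analysis.
From mathcomp Require Import ring lra zify.
Import Order.TTheory GRing.Theory Num.Theory.
Local Open Scope ring_scope.
Set Implicit Arguments.
Unset Strict Implicit.
Unset Printing Implicit Defensive.

(* Let h_t, m_t be the Hedge and mix losses of AdaHedge, delta_t = h_t - m_t
   the mixability gap and Delta_t its running sum.
   1. Since the loss is affine, l_t(yhat_t) = h_t, and abstaining with
      probability 1 - |yhat_t| costs at most h_t - (1 - 2 c_t) v_t.
   2. The mix losses telescope through the exponential-weights potential,
      which grows as the rate ln d / Delta decreases; hence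
      sum_t h_t <= L_{T,i} + 2 Delta_T.
   3. The Bernstein bound delta <= eta v / 2 + eta delta / 3 on the gap yields
      Delta_T^2 <= ln d V_T + (2/3 ln d + 1) Delta_T, so
      Delta_T <= sqrt(ln d V_T) + 2/3 ln d + 1.
   4. Finally 2 sqrt(ln d V) - (1 - 2 max c) V <= ln d / (1 - 2 max c). *)

Section ExpInequalities.
Variable R : realType.

Lemma mvt_everywhere (f df : R -> R) (a b : R) : a < b ->
  (forall x, is_derive x (1 : R) f (df x)) ->
  exists2 c, a < c < b & f b - f a = df c * (b - a).
Proof.
move=> ab hd.
have [c cab ->] := MVT ab (fun x _ => hd x)
  (derivable_within_continuous (fun x _ => @ex_derive _ _ _ _ _ _ _ (hd x))).
by exists c => //; rewrite in_itv /= in cab.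
Qed.

Lemma sign_of_nondecreasing (f df : R -> R) :
  f 0 = 0 -> (forall x, is_derive x (1 : R) f (df x)) -> (forall x, 0 <= df x) ->
  forall x, 0 <= x * f x.
Proof.
move=> f0 hd df0 x; case: (ltgtP 0 x) => [x0|x0|<-]; last by rewrite mul0r.
- have [c _] := mvt_everywhere x0 hd; rewrite f0 subr0 => ->.
  by have := df0 c; nra.
- have [c _] := mvt_everywhere x0 hd; rewrite f0 sub0r => /eqP.
  rewrite eqr_oppLR => /eqP ->; have := df0 c; nra.
Qed.

Lemma ge0_of_min_at0 (f df : R -> R) :
  f 0 = 0 -> (forall x, is_derive x (1 : R) f (df x)) -> (forall x, 0 <= x * df x) ->
  forall x, 0 <= f x.
Proof.
move=> f0 hd dfs x; case: (ltgtP 0 x) => [x0|x0|<-]; last by rewrite f0.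
- have [c /andP[c0 _]] := mvt_everywhere x0 hd; rewrite f0 subr0 => ->.
  by have := dfs c; nra.
- have [c /andP[_ c0]] := mvt_everywhere x0 hd; rewrite f0 sub0r => /eqP.
  rewrite eqr_oppLR => /eqP ->; have := dfs c; nra.
Qed.

(* The three successive remainders of the Bernstein bound on the exponential;
   each is the derivative of the previous one. *)
Definition bern_rem2 (y : R) : R := (1 - expR y * (1 - y)) / 3.
Definition bern_rem1 (y : R) : R := (2 + y) / 3 - expR y * (2 - y) / 3.
Definition bern_rem0 (y : R) : R := 1 + 2 * y / 3 + y ^+ 2 / 6 - expR y * (1 - y / 3).

Lemma bern_rem2_ge0 y : 0 <= bern_rem2 y.
Proof.
rewrite /bern_rem2 divr_ge0 // subr_ge0.
have := ler_wpM2l (ltW (expR_gt0 y)) (expR_ge1Dx (- y)).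
by rewrite -expRD subrr expR0 addrC.
Qed.

Lemma bern_rem0_ge0 y : 0 <= bern_rem0 y.
Proof.
have d1 x : is_derive x (1 : R) bern_rem1 (bern_rem2 x).
  by apply: is_derive_eq; rewrite /GRing.scale /bern_rem2 /=; field.
have d0 x : is_derive x (1 : R) bern_rem0 (bern_rem1 x).
  by apply: is_derive_eq; rewrite /GRing.scale /bern_rem1 /=; field.
apply: (ge0_of_min_at0 _ d0 _); first by rewrite /bern_rem0 expR0; field.
apply: (sign_of_nondecreasing _ d1 bern_rem2_ge0).
by rewrite /bern_rem1 expR0; field.
Qed.

Lemma expR_bernstein (y k : R) : 0 < k -> k <= 1 - y / 3 ->
  k * (expR y - 1 - y) <= y ^+ 2 / 2.
Proof.
move=> k0 ky.
have rem := bern_rem0_ge0 y; have taylor := expR_ge1Dx y.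
have -> : y ^+ 2 / 2 = (1 - y / 3) * (expR y - 1 - y) + bern_rem0 y.
  by rewrite /bern_rem0; field.
have : k * (expR y - 1 - y) <= (1 - y / 3) * (expR y - 1 - y).
  by apply: ler_wpM2r; lra.
lra.
Qed.

Lemma expR_chord (r u : R) : 0 <= r <= 1 -> expR (r * u) <= r * expR u + (1 - r).
Proof.
move=> /andP[r0 r1]; rewrite -subr_ge0.
pose g x := r * expR x + (1 - r) - expR (r * x).
have dg x : is_derive x (1 : R) g (r * (expR x - expR (r * x))).
  by apply: is_derive_eq; rewrite /GRing.scale /=; ring.
apply: (ge0_of_min_at0 (f := g) _ dg) => [|x]; first by rewrite /g !mulr0 expR0; ring.
rewrite mulrCA mulr_ge0 //.
case: (lerP 0 x) => x0.
- have : expR (r * x) <= expR x by rewrite ler_expR; nra.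
  nra.
- have : expR x <= expR (r * x) by rewrite ler_expR; nra.
  nra.
Qed.

End ExpInequalities.

Section Potential.
Variables (R : realType) (d : nat).
Hypothesis d_gt0 : (0 < d)%N.

Local Notation N := (ln (d%:R : R)).

Definition mean_exp (u : 'I_d -> R) : R := (d%:R)^-1 * \sum_(j < d) expR (u j).

(* The exponential-weights potential -1/eta ln((1/d) sum_j e^{-eta L_j}); the
   mix losses of Hedge telescope into differences of this potential. *)
Definition potential (e : R) (L : 'I_d -> R) : R :=
  - e^-1 * ln (mean_exp (fun j => - e * L j)).

Lemma dR_gt0 : 0 < (d%:R : R).
Proof. by rewrite ltr0n. Qed.

Lemma sum_expR_gt0 (u : 'I_d -> R) : 0 < \sum_(j < d) expR (u j).
Proof.
pose j0 : 'I_d := Ordinal d_gt0.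
apply: (lt_le_trans (expR_gt0 (u j0))).
by rewrite (bigD1 j0) //= lerDl sumr_ge0 // => i _; exact: expR_ge0.
Qed.

Lemma mean_exp_gt0 (u : 'I_d -> R) : 0 < mean_exp u.
Proof. by rewrite mulr_gt0 ?invr_gt0 ?dR_gt0 ?sum_expR_gt0. Qed.

Lemma ler_negmul (e a b : R) : 0 < e -> a <= b -> - e^-1 * b <= - e^-1 * a.
Proof.
by move=> e0 ab; rewrite !mulNr lerN2 ler_wpM2l // ltW // invr_gt0.
Qed.

Lemma potential_le_expert (e : R) L i : 0 < e -> potential e L <= L i + N / e.
Proof.
move=> e0.
have : ln ((d%:R)^-1 * expR (- e * L i)) <= ln (mean_exp (fun j => - e * L j)).
  rewrite ler_ln ?posrE ?mean_exp_gt0 ?mulr_gt0 ?invr_gt0 ?dR_gt0 ?expR_gt0 //.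
  rewrite ler_wpM2l ?invr_ge0 ?ler0n //.
  by rewrite (bigD1 i) //= lerDl sumr_ge0 // => j _; exact: expR_ge0.
rewrite lnM ?posrE ?invr_gt0 ?dR_gt0 ?expR_gt0 // expRK lnV ?posrE ?dR_gt0 //.
move=> /(ler_negmul e0); rewrite -/(potential e L) => /le_trans; apply.
by rewrite le_eqVlt; apply/orP; left; apply/eqP; field; rewrite gt_eqF.
Qed.

Lemma potential_ge_lb (e m : R) L : 0 < e -> (forall j, m <= L j) -> m <= potential e L.
Proof.
move=> e0 hm.
have : mean_exp (fun j => - e * L j) <= expR (- e * m).
  rewrite /mean_exp -(ler_pM2l dR_gt0) mulrA mulfV ?gt_eqF ?dR_gt0 // mul1r.
  have -> : d%:R * expR (- e * m) = \sum_(j < d) expR (- e * m).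
    by rewrite sumr_const card_ord mulr_natl.
  apply: ler_sum => j _; rewrite ler_expR; have := hm j; nra.
rewrite -ler_ln ?posrE ?mean_exp_gt0 ?expR_gt0 // expRK => /(ler_negmul e0).
apply: le_trans; rewrite le_eqVlt; apply/orP; left; apply/eqP.
by field; rewrite gt_eqF.
Qed.

Lemma potential_shift (e c : R) L : 0 < e ->
  potential e (fun j => c + L j) = c + potential e L.
Proof.
move=> e0; rewrite /potential /mean_exp.
have -> : \sum_(j < d) expR (- e * (c + L j)) = expR (- e * c) * \sum_(j < d) expR (- e * L j).
  by rewrite mulr_sumr; apply: eq_bigr => j _; rewrite -expRD mulrDr.
rewrite mulrCA lnM ?posrE ?expR_gt0 ?mean_exp_gt0 // expRK.
by field; rewrite gt_eqF.
Qed.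

(* Power-mean inequality: for 0 <= r <= 1, mean(X^r) <= mean(X)^r, with
   X_j = e^{u_j}; it follows from the convexity of the exponential. *)
Lemma mean_exp_scale (r : R) (u : 'I_d -> R) : 0 <= r <= 1 ->
  mean_exp (fun j => r * u j) <= expR (r * ln (mean_exp u)).
Proof.
move=> r01; set A := mean_exp u; have A0 : 0 < A by exact: mean_exp_gt0.
have hj j : expR (r * u j) <= expR (r * ln A) * (r * (expR (u j) / A) + (1 - r)).
  have -> : r * u j = r * ln A + r * (u j - ln A) by ring.
  rewrite expRD ler_wpM2l ?expR_ge0 //.
  have -> : expR (u j) / A = expR (u j - ln A) by rewrite expRB lnK ?posrE.
  exact: expR_chord.
have sA : \sum_(j < d) expR (u j) = d%:R * A.
  by rewrite /A /mean_exp mulrA mulfV ?gt_eqF ?dR_gt0 // mul1r.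
rewrite /mean_exp -(ler_pM2l dR_gt0) mulrA mulfV ?gt_eqF ?dR_gt0 // mul1r.
apply: (le_trans (ler_sum _ (fun j _ => hj j))).
rewrite -mulr_sumr big_split /= -mulr_sumr -mulr_suml sA sumr_const card_ord.
by rewrite le_eqVlt; apply/orP; left; apply/eqP; field; rewrite gt_eqF.
Qed.

Lemma potential_antimono (e1 e2 : R) L : 0 < e2 -> e2 <= e1 ->
  potential e1 L <= potential e2 L.
Proof.
move=> e20 e21; have e10 : 0 < e1 by exact: lt_le_trans e21.
set r := e2 / e1.
have r01 : 0 <= r <= 1.
  by rewrite divr_ge0 ?(ltW e20) ?(ltW e10) //= ler_pdivrMr // mul1r.
have := mean_exp_scale (fun j => - e1 * L j) r01.
have -> : (fun j => r * (- e1 * L j)) = (fun j => - e2 * L j).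
  by apply/funext => j; rewrite /r; field; rewrite gt_eqF.
rewrite -ler_ln ?posrE ?mean_exp_gt0 ?expR_gt0 // expRK => /(ler_negmul e20).
rewrite -/(potential e2 L); apply: le_trans.
rewrite /potential le_eqVlt; apply/orP; left; apply/eqP.
by rewrite /r; field; rewrite !gt_eqF.
Qed.

Lemma gibbs_mix_loss (e : R) (L l : 'I_d -> R) : 0 < e ->
  - e^-1 * ln (\sum_(i < d)
      (expR (- e * L i) / \sum_(j < d) expR (- e * L j)) * expR (- e * l i))
  = potential e (fun j => L j + l j) - potential e L.
Proof.
move=> e0.
set S := \sum_(j < d) expR (- e * L j).
set S' := \sum_(j < d) expR (- e * (L j + l j)).
have S0 : 0 < S := sum_expR_gt0 _; have S'0 : 0 < S' := sum_expR_gt0 _.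
have -> : \sum_(i < d) (expR (- e * L i) / S) * expR (- e * l i) = S' / S.
  by rewrite /S' mulr_suml; apply: eq_bigr => i _; rewrite mulrAC -expRD mulrDr.
rewrite /potential /mean_exp -/S -/S' ln_div ?posrE // !lnM ?posrE ?invr_gt0 ?dR_gt0 //.
ring.
Qed.

End Potential.

Section MixabilityGap.
Variables (R : realType) (d : nat) (p l : 'I_d -> R) (e : R).
Hypotheses (p_ge0 : forall i, 0 <= p i) (p_sum1 : \sum_(i < d) p i = 1).
Hypotheses (l01 : forall i, 0 <= l i <= 1) (e_gt0 : 0 < e).

(* Hedge loss h, exponential moment Z, mixability gap h - m with
   m = -1/eta ln Z, and variance of the losses under p. *)
Local Notation h := (\sum_(i < d) p i * l i).
Local Notation Z := (\sum_(i < d) p i * expR (- e * l i)).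
Local Notation gap := (h + e^-1 * ln Z).
Local Notation var := (\sum_(i < d) p i * (h - l i) ^+ 2).

Local Notation W := (\sum_(i < d) p i * expR (e * (h - l i))).

Lemma mean_loss_bounds : 0 <= h <= 1.
Proof.
apply/andP; split; first by rewrite sumr_ge0 // => i _; have := l01 i; have := p_ge0 i; nra.
rewrite -p_sum1 ler_sum // => i _; have := l01 i; have := p_ge0 i; nra.
Qed.

Lemma exp_moment_bounds : 0 < Z <= 1.
Proof.
have Zge : expR (- e) <= Z.
  rewrite -[leLHS]mul1r -p_sum1 mulr_suml ler_sum // => i _.
  by apply: ler_wpM2l => //; rewrite ler_expR; have := l01 i; have := e_gt0; nra.
rewrite (lt_le_trans (expR_gt0 _) Zge) /= -p_sum1 ler_sum // => i _.
rewrite -[leRHS]mulr1; apply: ler_wpM2l => //.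
by rewrite expR_le1; have := l01 i; have := e_gt0; nra.
Qed.

Lemma centred_mean : \sum_(i < d) p i * (e * (h - l i)) = 0.
Proof.
rewrite (eq_bigr (fun i => e * h * p i - e * (p i * l i))); last by move=> i _; ring.
by rewrite sumrB -!mulr_sumr p_sum1; ring.
Qed.

Lemma ln_moment_gap : ln W = e * gap.
Proof.
have [Z0 _] := andP exp_moment_bounds.
have -> : W = expR (e * h) * Z.
  by rewrite mulr_sumr; apply: eq_bigr => i _; rewrite mulrCA -expRD; congr (_ * expR _); ring.
by rewrite lnM ?posrE ?expR_gt0 // expRK; field; rewrite gt_eqF.
Qed.

(* Since e^x >= 1 + x, the moment generating function of a centred variable
   is at least 1. *)
Lemma moment_ge1 : 1 <= W.
Proof.
have : \sum_(i < d) p i * (1 + e * (h - l i)) <= W.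
  by apply: ler_sum => i _; rewrite ler_wpM2l // expR_ge1Dx.
rewrite (eq_bigr (fun i => p i + p i * (e * (h - l i)))); last by move=> i _; ring.
by rewrite big_split /= centred_mean p_sum1 addr0.
Qed.

Lemma gap_bounds : 0 <= gap <= 1.
Proof.
have [Z0 Z1] := andP exp_moment_bounds; have [_ h1] := andP mean_loss_bounds.
apply/andP; split.
- rewrite -(pmulr_rge0 _ e_gt0) -ln_moment_gap.
  exact: ln_ge0 moment_ge1.
- have : e^-1 * ln Z <= 0.
    by apply: mulr_ge0_le0; [rewrite invr_ge0 ltW | exact: ln_le0].
  lra.
Qed.

Lemma moment_bernstein : e < 3 -> (1 - e / 3) * (W - 1) <= e ^+ 2 * var / 2.
Proof.
move=> e3; set k := 1 - e / 3.
have hk i : p i * (k * (expR (e * (h - l i)) - 1 - e * (h - l i)))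
            <= p i * ((e * (h - l i)) ^+ 2 / 2).
  apply: ler_wpM2l => //; apply: expR_bernstein; first by rewrite /k; lra.
  have [_ h1] := andP mean_loss_bounds; have := l01 i; have := e_gt0; rewrite /k; nra.
have lhsE : \sum_(i < d) p i * (k * (expR (e * (h - l i)) - 1 - e * (h - l i)))
             = k * (W - 1).
  transitivity (\sum_(i < d) (k * (p i * expR (e * (h - l i))) - k * p i
                               - k * (p i * (e * (h - l i))))).
    by apply: eq_bigr => i _; ring.
  by rewrite !sumrB -!mulr_sumr p_sum1 centred_mean; ring.
have rhsE : \sum_(i < d) p i * ((e * (h - l i)) ^+ 2 / 2) = e ^+ 2 * var / 2.
  rewrite mulr_sumr mulr_suml; apply: eq_bigr => i _; ring.
by rewrite -lhsE -rhsE; apply: ler_sum => i _; exact: hk.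
Qed.

(* Bernstein-type bound on the mixability gap (Lemma of de Rooij et al.):
   gap <= eta var / 2 + eta gap / 3. *)
Lemma gap_bernstein : gap <= e * var / 2 + e * gap / 3.
Proof.
have [g0 _] := andP gap_bounds.
have var0 : 0 <= var by rewrite sumr_ge0 // => i _; rewrite mulr_ge0 ?sqr_ge0.
case: (lerP 3 e) => e3.
  have : 0 <= e * var / 2 by rewrite divr_ge0 // mulr_ge0 // ltW.
  nra.
have W1 := moment_ge1.
have lnW : e * gap <= W - 1.
  rewrite -ln_moment_gap; have /le_ln1Dx : -1 < W - 1 by lra.
  by rewrite addrCA subrr addr0.
have : (1 - e / 3) * (e * gap) <= e ^+ 2 * var / 2.
  apply: le_trans (moment_bernstein e3); apply: ler_wpM2l => //; lra.
move=> H; suff : e * (gap - e * var / 2 - e * gap / 3) <= 0 by rewrite pmulr_rle0 //; lra.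
lra.
Qed.

End MixabilityGap.

Section AdaHedgeWeights.
Variables (R : realType) (d : nat).

Lemma ah_weights_ge0 (D : R) (L : 'I_d -> R) i : 0 <= ah_weights D L i.
Proof.
rewrite /ah_weights; case: ifP => _; first by case: ifP; rewrite ?invr_ge0 ?ler0n.
by rewrite divr_ge0 ?expR_ge0 // sumr_ge0 // => j _; exact: expR_ge0.
Qed.

Lemma ah_weights_gibbs (D : R) (L : 'I_d -> R) i : D != 0 ->
  ah_weights D L i = expR (- eta_of d D * L i) / \sum_(j < d) expR (- eta_of d D * L j).
Proof. by move=> /negbTE D0; rewrite /ah_weights D0. Qed.

Lemma ah_weights_uniform (L : 'I_d -> R) i : (forall j k, L j = L k) ->
  ah_weights 0 L i = (d%:R)^-1.
Proof.
move=> HL; rewrite /ah_weights eqxx.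
have minL k : [forall j, L k <= L j] by apply/forallP => j; rewrite (HL k j).
rewrite minL; congr (_%:R^-1).
by rewrite -[RHS](card_ord d); apply: eq_card => k; rewrite inE minL.
Qed.

Lemma uniform_sum1 : (0 < d)%N -> \sum_(i < d) (d%:R : R)^-1 = 1.
Proof.
by move=> d0; rewrite sumr_const card_ord -[_ *+ d]mulr_natr mulVf // pnatr_eq0 -lt0n.
Qed.

Lemma ah_weights_gibbs_sum1 (D : R) (L : 'I_d -> R) : (0 < d)%N -> D != 0 ->
  \sum_(i < d) ah_weights D L i = 1.
Proof.
move=> d0 D0; rewrite (eq_bigr _ (fun i _ => ah_weights_gibbs L i D0)) -mulr_suml.
by rewrite mulfV // gt_eqF // (sum_expR_gt0 d0).
Qed.

Lemma two_experts (i j : 'I_d) : i != j -> (1 < d)%N.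
Proof.
by rewrite -(inj_eq val_inj) /=; have := ltn_ord i; have := ltn_ord j; lia.
Qed.

Lemma mix_loss_infty (p l : 'I_d -> R) : (0 < d)%N -> (forall i, 0 < p i) ->
  (exists i1, mix_loss 0 p l = l i1) /\ (forall j, mix_loss 0 p l <= l j).
Proof.
move=> d0 pp; rewrite /mix_loss eqxx.
case: pickP => [i0 Pi0|]; last by move=> /(_ (Ordinal d0)); rewrite pp.
split; last by move=> j; rewrite (bigD1 j) ?pp //= ge_min lexx.
apply: (big_ind (fun v => exists i, v = l i)); first by exists i0.
- by move=> _ _ [i ->] [j ->]; case: leP => _; [exists i | exists j].
- by move=> i _; exists i.
Qed.

End AdaHedgeWeights.

Section Abstention.
Variable R : realType.

Lemma abstention_round (yt a c : R) : (yt = 1 \/ yt = -1) -> -1 <= a <= 1 -> c <= 1 / 2 ->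
  (1 - (1 - `|a|)) * lossf yt (Num.sg a) + (1 - `|a|) * c
  <= lossf yt a - (1 - 2 * c) * (lossf yt a * (1 - lossf yt a)).
Proof.
move=> hy /andP[a1 a2] hc; rewrite /lossf.
have H1 : 0 <= (1 - 2 * c) * (1 - a) ^+ 2 by apply: mulr_ge0; [lra | exact: sqr_ge0].
have H2 : 0 <= (1 - 2 * c) * (1 + a) ^+ 2 by apply: mulr_ge0; [lra | exact: sqr_ge0].
case: (ltgtP a 0) => ha.
- by rewrite ltr0_sg // ltr0_norm //; case: hy => ->; nra.
- by rewrite gtr0_sg // gtr0_norm //; case: hy => ->; nra.
- by rewrite ha sgr0 normr0; case: hy => ->; nra.
Qed.

Lemma variance_le_bernoulli (d : nat) (p l : 'I_d -> R) :
  (forall i, 0 <= p i) -> \sum_(i < d) p i = 1 -> (forall i, 0 <= l i <= 1) ->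
  \sum_(i < d) p i * (\sum_(j < d) p j * l j - l i) ^+ 2
  <= (\sum_(j < d) p j * l j) * (1 - \sum_(j < d) p j * l j).
Proof.
move=> p0 p1 l01; set h := \sum_(j < d) p j * l j.
rewrite (eq_bigr (fun i => h ^+ 2 * p i - 2 * h * (p i * l i) + p i * l i ^+ 2));
  last by move=> i _; ring.
rewrite big_split /= sumrB -!mulr_sumr p1 -/h.
have : \sum_(i < d) p i * l i ^+ 2 <= h.
  by apply: ler_sum => i _; apply: ler_wpM2l => //; have := l01 i; nra.
lra.
Qed.

End Abstention.

Section RegretAlgebra.
Variable R : realType.

Lemma quadratic_bound (x a b : R) : 0 <= x -> 0 <= a -> 0 <= b -> x ^+ 2 <= a + b * x ->
  x <= Num.sqrt a + b.
Proof.
move=> x0 a0 b0 H; have s0 := sqrtr_ge0 a; have s2 := sqr_sqrtr a0.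
case: (lerP x b) => xb; first lra.
rewrite leNgt; apply/negP => hxs; set s := Num.sqrt a in s0 s2 hxs.
have : 0 < (x - b - s) * (x - b + s) by apply: mulr_gt0; lra.
have : b * b <= b * x by apply: ler_wpM2l => //; lra.
nra.
Qed.

(* 2 sqrt(N V) - k V is bounded by N / k (maximising over V), and trivially
   by 2 sqrt(N V). *)
Lemma sqrt_minus_linear (N V k : R) : 0 <= N -> 0 <= V -> 0 < k ->
  2 * Num.sqrt (N * V) - k * V <= Num.min (N / k) (2 * Num.sqrt (N * V)).
Proof.
move=> N0 V0 k0; rewrite le_min; apply/andP; split; last first.
  have : 0 <= k * V by rewrite mulr_ge0 // ltW.
  lra.
rewrite sqrtrM // ler_pdivlMr //.
set a := Num.sqrt N; set b := Num.sqrt V.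
rewrite -(sqr_sqrtr N0) -(sqr_sqrtr V0) -/a -/b.
have : 0 <= (a - k * b) ^+ 2 by exact: sqr_ge0.
nra.
Qed.

End RegretAlgebra.

Section AdaHedgeAnalysis.
Variables (R : realType) (d : nat) (y : nat -> R) (ye : nat -> 'I_d -> R) (T : nat).
Hypothesis labels : forall t, (t < T)%N -> y t = 1 \/ y t = -1.
Hypothesis predictions : forall t i, (t < T)%N -> -1 <= ye t i <= 1.
Hypothesis d_gt0 : (0 < d)%N.

Local Notation Dl t := (ah_Delta y ye t).
Local Notation Lc t := (cumL y ye t).
Local Notation pw t := (ah_p y ye t).
Local Notation lo t := (eloss y ye t).
Local Notation hh t := (hedge_loss (pw t) (lo t)).
Local Notation mm t := (mix_loss (Dl t) (pw t) (lo t)).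
Local Notation vv t := (\sum_(i < d) pw t i * (hh t - lo t i) ^+ 2).
Local Notation M t := (\sum_(s < t) mm s).
Local Notation V t := (\sum_(s < t) vv s).
Local Notation N := (ln (d%:R : R)).

Lemma Delta_succ t : Dl t.+1 = Dl t + (hh t - mm t).
Proof. by []. Qed.

Lemma mixsum_succ t : M t.+1 = M t + mm t.
Proof. by rewrite big_ord_recr. Qed.

Lemma varsum_succ t : V t.+1 = V t + vv t.
Proof. by rewrite big_ord_recr. Qed.

Lemma cumL_succ t j : Lc t.+1 j = Lc t j + lo t j.
Proof. by rewrite /cumL big_ord_recr. Qed.

Lemma eloss01 t i : (t < T)%N -> 0 <= lo t i <= 1.
Proof.
move=> tT; rewrite /eloss /lossf.
by have := predictions i tT; case: (labels tT) => -> /andP[? ?]; apply/andP; split; lra.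
Qed.

Lemma lnd_ge0 : 0 <= N.
Proof. by rewrite ln_ge0 // ler1n. Qed.

Lemma lnd_gt0 : (1 < d)%N -> 0 < N.
Proof. by move=> hd; rewrite ln_gt0 // ltr1n. Qed.

Lemma vv_ge0 t : 0 <= vv t.
Proof. by rewrite sumr_ge0 // => i _; rewrite mulr_ge0 ?sqr_ge0 ?ah_weights_ge0. Qed.

Lemma V_ge0 t : 0 <= V t.
Proof. by rewrite sumr_ge0 // => s _; exact: vv_ge0. Qed.

Definition adahedge_inv t :=
  [/\ 0 <= Dl t,
      Dl t = 0 -> (forall j k, Lc t j = Lc t k) /\ (forall j, M t = Lc t j),
      0 < Dl t -> (1 < d)%N /\ M t <= potential (N / Dl t) (Lc t)
    & Dl t ^+ 2 <= N * V t + (2 * N / 3 + 1) * Dl t].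

(* Step of the invariant while the learning rate is infinite: the weights
   are uniform and the mix loss is the smallest loss. *)
Lemma inv_step_uniform t : (t < T)%N -> adahedge_inv t -> Dl t = 0 -> adahedge_inv t.+1.
Proof.
move=> tT [_ HD0 _ _] Dz; have [Lconst HM] := HD0 Dz.
have pu i : pw t i = (d%:R)^-1 by rewrite /ah_p Dz ah_weights_uniform.
have pp i : 0 < pw t i by rewrite pu invr_gt0 ltr0n.
have p1 : \sum_(i < d) pw t i = 1.
  by rewrite (eq_bigr _ (fun i _ => pu i)) uniform_sum1.
have [[i1 mi1] mle] := mix_loss_infty (lo t) d_gt0 pp.
rewrite /adahedge_inv Delta_succ mixsum_succ varsum_succ Dz add0r.
set m := mix_loss 0 (pw t) (lo t) in mi1 mle *.
have gapE : hh t - m = \sum_(i < d) pw t i * (lo t i - m).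
  rewrite (eq_bigr (fun i => pw t i * lo t i - m * pw t i)); last by move=> i _; ring.
  by rewrite sumrB -mulr_sumr p1 mulr1.
have gap_terms i : 0 <= pw t i * (lo t i - m).
  by apply: mulr_ge0; [exact: ltW | rewrite subr_ge0].
have gap0 : 0 <= hh t - m by rewrite gapE sumr_ge0.
have [gz|gnz] := eqVneq (hh t - m) 0.
- have lm i : lo t i = m.
    move: gz; rewrite gapE => /(psumr_eq0P (fun j _ => gap_terms j)) /(_ i isT) /eqP.
    by rewrite mulf_eq0 gt_eqF //= subr_eq0 => /eqP.
  rewrite gz; split=> //; last by rewrite expr0n /= mulr0 addr0 mulr_ge0 ?addr_ge0 ?lnd_ge0 ?V_ge0 ?vv_ge0.
  + by split=> [j k|j]; rewrite !cumL_succ ?(Lconst j k) ?(HM j) !lm.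
  + by rewrite ltxx.
- have gpos : 0 < hh t - m by rewrite lt_def gnz gap0.
  have hd : (1 < d)%N.
    have [i2 hi2] : exists i2, lo t i2 != m.
      apply/existsP; apply: contraT; rewrite negb_exists => /forallP H.
      move: gnz; rewrite gapE big1 ?eqxx // => i _.
      by move: (H i); rewrite negbK => /eqP ->; rewrite subrr mulr0.
    by apply: (@two_experts _ i2 i1); apply: contraNneq hi2 => ->; rewrite mi1.
  have [h0 h1] := andP (mean_loss_bounds (fun i => ltW (pp i)) p1 (fun i => eloss01 i tT)).
  split; [exact: ltW | by move=> gz; rewrite gz eqxx in gnz | split=> // |].
  + pose j0 : 'I_d := Ordinal d_gt0.
    have -> : Lc t.+1 = (fun j => Lc t j0 + lo t j).
      by apply/funext => j; rewrite cumL_succ (Lconst j j0).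
    rewrite (potential_shift d_gt0) ?divr_gt0 ?lnd_gt0 // (HM j0) lerD2l.
    by apply: (potential_ge_lb d_gt0); rewrite ?divr_gt0 ?lnd_gt0.
  + have m0 : 0 <= m by rewrite mi1; case/andP: (eloss01 i1 tT).
    have g1 : hh t - m <= 1 by rewrite /hedge_loss; lra.
    have : (hh t - m) ^+ 2 <= hh t - m by rewrite expr2; nra.
    have := lnd_ge0; have := V_ge0 t; have := vv_ge0 t; nra.
Qed.

(* Step of the invariant at a finite learning rate eta = ln d / Delta_t: the
   mix losses telescope through the potential, the potential only grows when
   eta decreases, and the Bernstein bound on the mixability gap controls the
   growth of Delta. *)
Lemma inv_step_gibbs t : (t < T)%N -> adahedge_inv t -> 0 < Dl t -> adahedge_inv t.+1.
Proof.
move=> tT [_ _ HDp HSq] Dpos; have [hd HMt] := HDp Dpos.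
have N0 := lnd_gt0 hd; set e := N / Dl t; have e0 : 0 < e by rewrite divr_gt0.
have pg i : pw t i = expR (- e * Lc t i) / \sum_(j < d) expR (- e * Lc t j).
  by rewrite /ah_p ah_weights_gibbs // gt_eqF.
have p0 i : 0 <= pw t i by exact: ah_weights_ge0.
have p1 : \sum_(i < d) pw t i = 1 by rewrite ah_weights_gibbs_sum1 // gt_eqF.
have mmE : mm t = - e^-1 * ln (\sum_(i < d) pw t i * expR (- e * lo t i)).
  by rewrite /mix_loss gt_eqF.
have gapE : hh t - mm t
    = \sum_(i < d) pw t i * lo t i + e^-1 * ln (\sum_(i < d) pw t i * expR (- e * lo t i)).
  by rewrite mmE /hedge_loss; ring.
have l01 i := eloss01 i tT.
have [g0 g1] := andP (gap_bounds p0 p1 l01 e0); rewrite -gapE in g0 g1.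
have gB := gap_bernstein p0 p1 l01 e0; rewrite -gapE /hedge_loss in gB.
have tele : mm t = potential e (Lc t.+1) - potential e (Lc t).
  rewrite mmE (eq_bigr _ (fun i _ => congr1 (fun x => x * expR (- e * lo t i)) (pg i))).
  rewrite (gibbs_mix_loss d_gt0) //; congr (potential _ _ - _).
  by apply/funext => j; rewrite cumL_succ.
rewrite /adahedge_inv Delta_succ mixsum_succ varsum_succ.
split; [lra | lra | move=> _; split=> // |].
- apply: (le_trans (y := potential e (Lc t.+1))); first lra.
  apply: (potential_antimono d_gt0); first by apply: divr_gt0; lra.
  by rewrite /e ler_pM2l // lef_pV2 ?posrE //; lra.
- have De : Dl t * e = N by rewrite /e mulrC divfK // gt_eqF.
  have : 2 * Dl t * (hh t - mm t) <= N * vv t + 2 * N * (hh t - mm t) / 3.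
    rewrite -De /hedge_loss; have := ler_wpM2l (ltW Dpos) gB; lra.
  have : (hh t - mm t) ^+ 2 <= hh t - mm t by rewrite expr2; nra.
  nra.
Qed.

Lemma inv_all t : (t <= T)%N -> adahedge_inv t.
Proof.
elim: t => [_|t IH tT].
  have L0 j : Lc 0 j = 0 by rewrite /cumL big_ord0.
  rewrite /adahedge_inv !big_ord0 /= expr2 !mulr0 addr0; split => //; last by rewrite ltxx.
  by move=> _; split => [j k|j]; rewrite !L0.
have inv := IH (ltnW tT); have [D0 _ _ _] := inv.
have [Dz|Dnz] := eqVneq (Dl t) 0; first exact: inv_step_uniform.
by apply: inv_step_gibbs; rewrite // lt_def Dnz.
Qed.

Lemma hedge_sum t : \sum_(s < t) hh s = M t + Dl t.
Proof.
elim: t => [|t IH]; first by rewrite !big_ord0 addr0.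
by rewrite Delta_succ mixsum_succ big_ord_recr /= IH; lra.
Qed.

Lemma ah_p_sum1 t : (t < T)%N -> \sum_(i < d) pw t i = 1.
Proof.
move=> tT; have [_ HD0 _ _] := inv_all (ltnW tT).
have [Dz|Dnz] := eqVneq (Dl t) 0; last exact: ah_weights_gibbs_sum1.
have [Lconst _] := HD0 Dz.
by rewrite /ah_p Dz (eq_bigr _ (fun i _ => ah_weights_uniform i Lconst)) uniform_sum1.
Qed.

Lemma hedge_regret i : \sum_(t < T) hh t <= Lc T i + 2 * Dl T.
Proof.
rewrite hedge_sum; have [D0 HD0 HDp _] := inv_all (leqnn T).
have [Dz|Dnz] := eqVneq (Dl T) 0.
  by have [_ HM] := HD0 Dz; rewrite (HM i) Dz; lra.
have Dpos : 0 < Dl T by rewrite lt_def Dnz D0.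
have [hd HMT] := HDp Dpos; have N0 := lnd_gt0 hd.
have := potential_le_expert d_gt0 (Lc T) i (divr_gt0 N0 Dpos).
have -> : N / (N / Dl T) = Dl T by field; rewrite !gt_eqF.
lra.
Qed.

Lemma Delta_bound : Dl T <= Num.sqrt (N * V T) + (2 * N / 3 + 1).
Proof.
have [D0 _ _ HSq] := inv_all (leqnn T); have N0 := lnd_ge0.
by apply: quadratic_bound; rewrite ?mulr_ge0 ?V_ge0 //; lra.
Qed.

(* Since the loss is affine in the prediction, the loss of the weighted mean
   prediction is the Hedge loss. *)
Lemma loss_of_mean t : (t < T)%N -> lossf (y t) (yhat y ye t) = hh t.
Proof.
move=> tT; rewrite /lossf /yhat /hedge_loss /eloss /lossf.
rewrite [RHS](eq_bigr (fun i => (pw t i - y t * (pw t i * ye t i)) / 2)); last by move=> i _; ring.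
by rewrite -mulr_suml sumrB ah_p_sum1 // -mulr_sumr.
Qed.

Lemma yhat_bounds t : (t < T)%N -> -1 <= yhat y ye t <= 1.
Proof.
move=> tT; have p1 := ah_p_sum1 tT.
have p0 i : 0 <= pw t i := ah_weights_ge0 _ _ i.
apply/andP; split.
- rewrite -[X in X <= _]mulN1r -p1 mulr_sumr /yhat; apply: ler_sum => i _.
  by have := predictions i tT; have := p0 i; nra.
- rewrite -p1 /yhat; apply: ler_sum => i _.
  by have := predictions i tT; have := p0 i; nra.
Qed.

Lemma learner_round (c : nat -> R) t : (t < T)%N -> c t <= 1 / 2 ->
  learner_exp_loss y ye c t <= hh t - (1 - 2 * c t) * vv t.
Proof.
move=> tT ct; have := abstention_round (labels tT) (yhat_bounds tT) ct.
rewrite loss_of_mean // => /le_trans; apply.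
have p0 i : 0 <= pw t i := ah_weights_ge0 _ _ i.
have := variance_le_bernoulli p0 (ah_p_sum1 tT) (fun i => eloss01 i tT).
rewrite /hedge_loss; nra.
Qed.

Lemma vt_eq t : (t < T)%N -> vt y ye t = vv t.
Proof. by move=> tT; rewrite /vt loss_of_mean. Qed.

Lemma abstention_regret (c : nat -> R) (i : 'I_d) :
  \big[Num.max/0]_(t < T) c t < 1 / 2 ->
  \sum_(t < T) learner_exp_loss y ye c t
  <= \sum_(t < T) eloss y ye t i
     + Num.min (N / (1 - 2 * \big[Num.max/0]_(t < T) c t))
               (2 * Num.sqrt (N * \sum_(t < T) vt y ye t))
     + 4 / 3 * N + 2.
Proof.
set cmax := \big[Num.max/0]_(t < T) c t => cmax_lt; set K := 1 - 2 * cmax.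
have K_gt0 : 0 < K by rewrite /K; lra.
have c_le t : (t < T)%N -> c t <= cmax.
  by move=> tT; rewrite /cmax (bigD1 (Ordinal tT)) //= le_max lexx.
have learner : \sum_(t < T) learner_exp_loss y ye c t <= \sum_(t < T) hh t - K * V T.
  rewrite mulr_sumr -sumrB; apply: ler_sum => t _; have tT := ltn_ord t.
  have := learner_round tT (le_trans (c_le t tT) (ltW cmax_lt)).
  by have := c_le t tT; have := vv_ge0 t; rewrite /K; nra.
rewrite (eq_bigr _ (fun t _ => vt_eq (ltn_ord t))).
have := hedge_regret i; have := Delta_bound; have := sqrt_minus_linear lnd_ge0 (V_ge0 T) K_gt0.
rewrite /cumL; lra.
Qed.

End AdaHedgeAnalysis.

Theorem mainTheorem10 (R : realType) (d T : nat)
  (y : nat -> R) (ye : nat -> 'I_d -> R) (c : nat -> R) :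
  (forall t, (t < T)%N -> y t = 1 \/ y t = -1) ->
  (forall t i, (t < T)%N -> -1 <= ye t i <= 1) ->
  (forall t, (t < T)%N -> 0 <= c t) ->
  \big[Num.max/0]_(t < T) c t < 1 / 2 ->
  forall i : 'I_d,
    \sum_(t < T) learner_exp_loss y ye c t
    <= \sum_(t < T) eloss y ye t i
       + Num.min (ln (d%:R) / (1 - 2 * \big[Num.max/0]_(t < T) c t))
                 (2 * Num.sqrt (ln (d%:R) * \sum_(t < T) vt y ye t))
       + 4 / 3 * ln (d%:R) + 2.
Proof.
move=> labels predictions _ cmax_lt i.
have d_gt0 : (0 < d)%N by apply: leq_ltn_trans (ltn_ord i).
exact: abstention_regret labels predictions d_gt0 c i cmax_lt.
Qed.
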